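(* Let $\langle S,L,\tau,\ell\rangle$ be a labelled Markov chain, $R$ a bisimulation with $S^2_\Delta\subseteq R\subseteq\,\sim$, and $P\in\mathcal{P}$ a maximal $R$-support policy. Then $\mathrm{Filter}(R)=\{(s,t)\in R\mid$ there is a path from $(s,t)$ to $S^2_\Delta$ in $\langle S\times S,P\rangle\}$.
   Context: Labelled Markov chain: finite $S$, finite $L$, $\tau:S\to\mathcal{D}(S)$, $\ell:S\to L$. $\Omega(\mu,\nu)$ = couplings. A bisimulation is an equivalence relation $R$ such that for $(s,t)\in R$, $\ell(s)=\ell(t)$ and some $\omega\in\Omega(\tau(s),\tau(t))$ has support in $R$; $\sim$ is bisimilarity. $S^2_\Delta=\{(s,s)\}$, $S^2_1=\{(s,t)\mid\ell(s)\ne\ell(t)\}$, $S^2_{0?}=(S\times S)\setminus(S^2_\Delta\cup S^2_1)$. $\mathcal{P}$ = policies $P:S\times S\to\mathcal{D}(S\times S)$ with $P(s,t)\in\Omega(\tau(s),\tau(t))$ for $(s,t)\notin S^2_1$ and $P(s,t)$ the point mass at $(s,t)$ for $(s,t)\in S^2_1$; a path in $\langle S\times S,P\rangle$ is a sequence of pairs with positive transition probabilities between consecutive ones. $P$ is a maximal $R$-support policy if $\mathrm{support}(P(s,t))=(\mathrm{support}(\tau(s))\times\mathrm{support}(\tau(t)))\cap R$ for all $(s,t)\in R\cap S^2_{0?}$. $R$ supports a path $(u_1,v_1)\dots(u_n,v_n)$ if $(u_i,v_i)\in R$ and $\mathrm{support}(P(u_i,v_i))\subseteq R$ for all $i$.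 $\mathrm{Filter}(R)=\{(s,t)\in R\mid\exists P'\in\mathcal{P}$ such that $R$ supports a path from $(s,t)$ to $S^2_\Delta$ in $\langle S\times S,P'\rangle\}$. *)

From HB Require Import structures.
From mathcomp Require Import all_boot all_order all_algebra.
Set Implicit Arguments. Unset Strict Implicit. Unset Printing Implicit Defensive.
Import Order.TTheory GRing.Theory Num.Theory.
Local Open Scope ring_scope.

Section LMC.
Variable K : realFieldType.

Definition is_dist (T : finType) (mu : {ffun T -> K}) : Prop :=
  (forall x, 0 <= mu x) /\ \sum_(x : T) mu x = 1.

Definition support (T : finType) (mu : {ffun T -> K}) : {set T} :=
  [set x | mu x != 0].

Definition point_mass (T : finType) (a : T) : {ffun T -> K} :=
  [ffun x => if x == a then 1 else 0].

Variables (S L : finType).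

Definition coupling (mu nu : {ffun S -> K}) (om : {ffun S * S -> K}) : Prop :=
  is_dist om /\
  (forall s, \sum_(t : S) om (s, t) = mu s) /\
  (forall t, \sum_(s : S) om (s, t) = nu t).

(* an LMC is given by tau : S -> D(S) and ell : S -> L *)
Definition is_LMC (tau : S -> {ffun S -> K}) : Prop := forall s, is_dist (tau s).

Definition equivalence_set (Rl : {set S * S}) : Prop :=
  (forall s, (s, s) \in Rl) /\
  (forall s t, (s, t) \in Rl -> (t, s) \in Rl) /\
  (forall s t u, (s, t) \in Rl -> (t, u) \in Rl -> (s, u) \in Rl).

Definition bisimulation (tau : S -> {ffun S -> K}) (ell : S -> L)
  (Rl : {set S * S}) : Prop :=
  equivalence_set Rl /\
  forall s t, (s, t) \in Rl ->
    ell s = ell t /\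
    exists om, coupling (tau s) (tau t) om /\ support om \subset Rl.

Definition bisimilar (tau : S -> {ffun S -> K}) (ell : S -> L) (s t : S) : Prop :=
  exists Rl, bisimulation tau ell Rl /\ (s, t) \in Rl.

Definition S2_Delta : {set S * S} := [set x | x.1 == x.2].
Definition S2_1 (ell : S -> L) : {set S * S} := [set x | ell x.1 != ell x.2].
Definition S2_0q (ell : S -> L) : {set S * S} := ~: (S2_Delta :|: S2_1 ell).

Definition policy (tau : S -> {ffun S -> K}) (ell : S -> L)
  (P : S * S -> {ffun S * S -> K}) : Prop :=
  forall x : S * S,
    (x \notin S2_1 ell -> coupling (tau x.1) (tau x.2) (P x)) /\
    (x \in S2_1 ell -> P x = point_mass x).

Definition Pstep (P : S * S -> {ffun S * S -> K}) : rel (S * S) :=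
  fun x y => 0 < P x y.

Definition path_to (P : S * S -> {ffun S * S -> K}) (x : S * S) (p : seq (S * S))
  (A : {set S * S}) : Prop :=
  path (Pstep P) x p /\ last x p \in A.

Definition maximal_support_policy (tau : S -> {ffun S -> K}) (ell : S -> L)
  (Rl : {set S * S}) (P : S * S -> {ffun S * S -> K}) : Prop :=
  forall s t, (s, t) \in Rl :&: S2_0q ell ->
    support (P (s, t)) = setX (support (tau s)) (support (tau t)) :&: Rl.

Definition supports (Rl : {set S * S}) (P : S * S -> {ffun S * S -> K})
  (x : S * S) (p : seq (S * S)) : Prop :=
  forall y, y \in x :: p -> y \in Rl /\ support (P y) \subset Rl.

Definition in_Filter (tau : S -> {ffun S -> K}) (ell : S -> L)
  (Rl : {set S * S}) (x : S * S) : Prop :=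
  x \in Rl /\
  exists P', policy tau ell P' /\
    exists p, path_to P' x p S2_Delta /\ supports Rl P' x p.

End LMC.

From Pilot Require Import Defs.
From HB Require Import structures.
From mathcomp Require Import all_boot all_order all_algebra.
Import Order.TTheory GRing.Theory Num.Theory.
Local Open Scope ring_scope.
Set Implicit Arguments. Unset Strict Implicit.

(* Off the diagonal, a pair of R cannot lie in S2_1, so the maximal R-support
   policy P has the largest support any policy can have there while staying
   inside R: a P'-path supported by R is a P-path up to its first diagonal
   pair.  Conversely, a P-path, cut at its first diagonal pair, is supported
   by R once P is redefined on the diagonal as the identity coupling, whose
   support lies in the diagonal. *)

Section PathsToSet.
Variables (T : eqType) (e e' : rel T) (A : pred T).

Lemma path_to_sub_in (I : pred T) x p :
  (forall a b, I a -> ~~ A a -> e a b -> e' a b) ->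
  all I (x :: p) -> path e x p -> A (last x p) ->
  exists2 q, path e' x q & A (last x q).
Proof.
move=> e_e'; elim: p x => [|y p IHp] x; first by exists [::].
case Ax: (A x); first by exists [::].
move=> /= /andP[Ix Iyp] /andP[exy yp] Alast.
have [q yq Aq] := IHp y Iyp yp Alast.
by exists (y :: q); rewrite //= yq andbT e_e' ?Ax.
Qed.

Lemma path_to_invariant (I : pred T) x p :
  (forall a b, I a -> ~~ A a -> e a b -> I b && e' a b) ->
  I x -> path e x p -> A (last x p) ->
  exists q, [/\ path e' x q, A (last x q) & all I (x :: q)].
Proof.
move=> e_e'; elim: p x => [|y p IHp] x Ix; first by exists [::]; rewrite /= Ix.
case Ax: (A x); first by exists [::]; rewrite /= Ix.
move=> /= /andP[exy yp] Alast; have /andP[Iy e'xy] := e_e' x y Ix (negbT Ax) exy.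
have [q [yq Aq Iq]] := IHp y Iy yp Alast.
by exists (y :: q); rewrite /= Ix e'xy yq.
Qed.

End PathsToSet.

Section Couplings.
Variables (K : realFieldType) (S : finType).

Lemma in_support_dist (T : finType) (mu : {ffun T -> K}) x :
  is_dist mu -> (x \in Defs.support mu) = (0 < mu x).
Proof. by case=> mu_ge0 _; rewrite inE lt0r mu_ge0 andbT. Qed.

Lemma coupling_support_sub (mu nu : {ffun S -> K}) om :
  coupling mu nu om -> Defs.support om \subset setX (Defs.support mu) (Defs.support nu).
Proof.
move=> [[om_ge0 _] [om1 om2]]; apply/subsetP => -[s t].
rewrite !inE /= => om_st; have om_gt0 : 0 < om (s, t) by rewrite lt0r om_st om_ge0.
have le_sum (F : S -> K) i : (forall j, 0 <= F j) -> F i <= \sum_j F j.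
  by move=> F_ge0; rewrite (bigD1 i) //= lerDl; apply: sumr_ge0.
by rewrite -om1 -om2 !gt_eqF // (lt_le_trans om_gt0) // le_sum // => j.
Qed.

Definition diag_coupling (mu : {ffun S -> K}) : {ffun S * S -> K} :=
  [ffun st => if st.1 == st.2 then mu st.1 else 0].

Lemma coupling_diag (mu : {ffun S -> K}) :
  is_dist mu -> coupling mu mu (diag_coupling mu).
Proof.
have sum_diag (s : S) : \sum_t (if s == t then mu s else 0) = mu s.
  by rewrite -big_mkcond (eq_bigl _ _ (fun t => eq_sym s t)) big_pred1_eq.
move=> [mu_ge0 mu1]; split; [split|split].
- by move=> [s t]; rewrite ffunE; case: ifP.
- rewrite -mu1 (eq_bigr (fun st => diag_coupling mu (st.1, st.2))) => [|[]//].
  rewrite -(pair_bigA _ (fun s t => diag_coupling mu (s, t))).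
  apply: eq_bigr => s _; under eq_bigr do rewrite ffunE /=; exact: sum_diag.
- move=> s; under eq_bigr do rewrite ffunE /=; exact: sum_diag.
- move=> t; under eq_bigr => s _ do rewrite ffunE /=.
  by rewrite -big_mkcond big_pred1_eq.
Qed.

Lemma support_diag_coupling (mu : {ffun S -> K}) :
  Defs.support (diag_coupling mu) \subset S2_Delta S.
Proof.
by apply/subsetP => -[s t]; rewrite !inE ffunE /=; case: (s =P t); rewrite ?eqxx.
Qed.

End Couplings.

Section MaximalSupportPolicy.
Variables (K : realFieldType) (S L : finType).
Variables (tau : S -> {ffun S -> K}) (ell : S -> L) (Rl : {set S * S}).
Hypothesis Rl_bisim : bisimulation tau ell Rl.

Lemma bisim_notin_S2_1 x : x \in Rl -> x \notin S2_1 ell.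
Proof.
by case: x => s t Rst; rewrite inE negbK; have [-> _] := Rl_bisim.2 s t Rst.
Qed.

Lemma bisim_offdiag_S2_0q x : x \in Rl -> x \notin S2_Delta S -> x \in S2_0q ell.
Proof.
by move=> Rx Dx; rewrite in_setC in_setU negb_or Dx bisim_notin_S2_1.
Qed.

Variable P : S * S -> {ffun S * S -> K}.
Hypotheses (P_policy : policy tau ell P) (P_max : maximal_support_policy tau ell Rl P).

Lemma support_maximal_policy x : x \in Rl -> x \notin S2_Delta S ->
  Defs.support (P x) = setX (Defs.support (tau x.1)) (Defs.support (tau x.2)) :&: Rl.
Proof.
case: x => s t Rst Dst; apply: P_max.
by rewrite inE Rst bisim_offdiag_S2_0q.
Qed.

Lemma Pstep_maximal_policy P' x y :
  policy tau ell P' -> x \in Rl -> x \notin S2_Delta S ->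
  Defs.support (P' x) \subset Rl -> Pstep P' x y -> Pstep P x y.
Proof.
move=> P'_policy Rx Dx P'x_sub; have x_S2_1 := bisim_notin_S2_1 Rx.
have [P'x_coupling _] := P'_policy x; have [Px_coupling _] := P_policy x.
have P'x_sub_Px : Defs.support (P' x) \subset Defs.support (P x).
  rewrite support_maximal_policy // subsetI P'x_sub andbT.
  exact: coupling_support_sub (P'x_coupling x_S2_1).
rewrite /Pstep -!in_support_dist; [exact: (subsetP P'x_sub_Px)|..].
- exact: (Px_coupling x_S2_1).1.
- exact: (P'x_coupling x_S2_1).1.
Qed.

Definition diag_repair : S * S -> {ffun S * S -> K} :=
  fun x => if x \in S2_Delta S then diag_coupling (tau x.1) else P x.

Lemma policy_diag_repair : is_LMC tau -> policy tau ell diag_repair.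
Proof.
move=> tau_dist x; rewrite /diag_repair; case: ifP => [|_]; last exact: P_policy.
case: x => s t; rewrite !inE /= => /eqP <-; rewrite eqxx.
by split=> // _; apply: coupling_diag.
Qed.

Lemma support_diag_repair_sub x :
  S2_Delta S \subset Rl -> x \in Rl -> Defs.support (diag_repair x) \subset Rl.
Proof.
move=> D_sub_Rl Rx; rewrite /diag_repair; case: ifPn => Dx.
  exact: subset_trans (support_diag_coupling _) D_sub_Rl.
by rewrite support_maximal_policy // subsetIr.
Qed.

Lemma Pstep_diag_repair x y : x \in Rl -> x \notin S2_Delta S ->
  Pstep P x y -> (y \in Rl) && Pstep diag_repair x y.
Proof.
move=> Rx Dx Pxy; apply/andP; split; last by rewrite /Pstep /diag_repair (negbTE Dx).
have [Px_coupling _] := P_policy x.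
have Px_dist := (Px_coupling (bisim_notin_S2_1 Rx)).1.
by move: Pxy; rewrite /Pstep -in_support_dist // support_maximal_policy // => /setIP[].
Qed.

End MaximalSupportPolicy.

Theorem mainTheorem18 (K : realFieldType) (S L : finType)
  (tau : S -> {ffun S -> K}) (ell : S -> L)
  (Rl : {set S * S}) (P : S * S -> {ffun S * S -> K}) :
  is_LMC tau ->
  bisimulation tau ell Rl ->
  S2_Delta S \subset Rl ->
  (forall s t, (s, t) \in Rl -> bisimilar tau ell s t) ->
  policy tau ell P ->
  maximal_support_policy tau ell Rl P ->
  forall x : S * S,
    in_Filter tau ell Rl x <->
    (x \in Rl /\ exists p : seq (S * S), path_to P x p (S2_Delta S)).
Proof.
move=> tau_dist Rl_bisim D_sub_Rl _ P_policy P_max x; split.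
- case=> Rx [P' [P'_policy [p [[P'p Dlast] Rp]]]]; split=> //.
  pose I := [pred y | (y \in Rl) && (Defs.support (P' y) \subset Rl)].
  have Ip : all I (x :: p) by apply/allP => y /Rp[Ry P'y_sub]; apply/andP.
  have P'_sub_P a b : I a -> a \notin S2_Delta S -> Pstep P' a b -> Pstep P a b.
    case/andP=> Ra P'a_sub Da.
    exact: (Pstep_maximal_policy Rl_bisim P_policy P_max P'_policy Ra Da P'a_sub).
  by have [q] := path_to_sub_in P'_sub_P Ip P'p Dlast; exists q.
- case=> Rx [p [Pp Dlast]]; split=> //.
  exists (diag_repair tau P); split; first exact: policy_diag_repair.
  have [q [P'q Dq Rq]] := path_to_invariant (I := mem Rl) (A := mem (S2_Delta S))
    (Pstep_diag_repair Rl_bisim P_policy P_max) Rx Pp Dlast.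
  exists q; split=> // y /(allP Rq) Ry; split=> //.
  exact: (support_diag_repair_sub Rl_bisim P_max D_sub_Rl Ry).
Qed.
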